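(* Let $\mathcal A$ be an $\mathbf{HpsUL}^\ast_\omega$-algebra. Then: (i) for all $x,y\in A$, $xy\le e$ iff $xy^2\le e$; (ii) for all $x_1,\dots,x_n\in A$ and all $k_1,\dots,k_n,l_1,\dots,l_n\in\mathbb Z_+$, $x_1^{k_1}\cdots x_n^{k_n}\le e$ iff $x_1^{l_1}\cdots x_n^{l_n}\le e$.
   Context: An $\mathbf{HpsUL}$-algebra is a structure $\mathcal A=\langle A,\wedge,\vee,\cdot,\backslash,/,e,f,\bot,\top\rangle$ such that: - $\langle A,\wedge,\vee,\bot,\top\rangle$ is a bounded lattice; - $\langle A,\cdot,e\rangle$ is a monoid; - for all $x,y,z$: $xy\le z$ iff $x\le z/y$ iff $y\le x\backslash z$; - for all $x,y,u,v$: $\lambda_u((x\vee y)\backslash x)\vee\rho_v((x\vee y)\backslash y)=e$, where $\lambda_a(b)=(a\backslash (ba))\wedge e$ and $\rho_a(b)=((ab)/a)\wedge e$. The constant $f$ is arbitrary. An $\mathbf{HpsUL}^\ast$-algebra is an $\mathbf{HpsUL}$-algebra satisfying weak commutativity: $xy\le e$ implies $yx\le e$. An $\mathbf{HpsUL}^\ast_\omega$-algebra is an $\mathbf{HpsUL}^\ast$-algebra satisfying $x\backslash e=x^2\backslash e$ for all $x$. Powers: $x^0=e$, $x^{n+1}=x^n\cdot x$. $\mathbb Z_+$ is the set of positive integers. *)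

From Stdlib Require Import Arith.

(* An HpsUL-algebra <A, meet, join, mul, ldiv, rdiv, e, f, bot, top>.
   ldiv x z  stands for  x \ z ;  rdiv z y  stands for  z / y. *)
Record HpsUL := {
  car :> Type;
  meet : car -> car -> car;
  join : car -> car -> car;
  mul  : car -> car -> car;
  ldiv : car -> car -> car;
  rdiv : car -> car -> car;
  e : car;
  f : car;
  bot : car;
  top : car;
  meet_comm : forall x y, meet x y = meet y x;
  meet_assoc : forall x y z, meet x (meet y z) = meet (meet x y) z;
  join_comm : forall x y, join x y = join y x;
  join_assoc : forall x y z, join x (join y z) = join (join x y) z;
  meet_join_absorb : forall x y, meet x (join x y) = x;
  join_meet_absorb : forall x y, join x (meet x y) = x;
  join_bot : forall x, join bot x = x;
  meet_top : forall x, meet top x = x;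
  mul_assoc : forall x y z, mul x (mul y z) = mul (mul x y) z;
  mul_e_l : forall x, mul e x = x;
  mul_e_r : forall x, mul x e = x;
  (* residuation: xy <= z iff x <= z/y iff y <= x\z, with a <= b := a /\ b = a *)
  resid_r : forall x y z, meet (mul x y) z = mul x y <-> meet x (rdiv z y) = x;
  resid_l : forall x y z, meet (mul x y) z = mul x y <-> meet y (ldiv x z) = y;
  hps : forall x y u v,
    join (meet (ldiv u (mul (ldiv (join x y) x) u)) e)
         (meet (rdiv (mul v (ldiv (join x y) y)) v) e) = e
}.

Arguments meet {h}. Arguments join {h}. Arguments mul {h}.
Arguments ldiv {h}. Arguments rdiv {h}. Arguments e {h}. Arguments f {h}.
Arguments bot {h}. Arguments top {h}.

Definition le {A : HpsUL} (x y : A) : Prop := meet x y = x.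

Definition lam {A : HpsUL} (a b : A) : A := meet (ldiv a (mul b a)) e.
Definition rho {A : HpsUL} (a b : A) : A := meet (rdiv (mul a b) a) e.

Fixpoint pw {A : HpsUL} (x : A) (n : nat) : A :=
  match n with O => e | S m => mul (pw x m) x end.

Definition weak_comm (A : HpsUL) : Prop :=
  forall x y : A, le (mul x y) e -> le (mul y x) e.

Definition omega_cond (A : HpsUL) : Prop :=
  forall x : A, ldiv x e = ldiv (pw x 2) e.

Fixpoint prodpw {A : HpsUL} (x : nat -> A) (k : nat -> nat) (n : nat) : A :=
  match n with O => e | S m => mul (prodpw x k m) (pw (x m) (k m)) end.

From Stdlib Require Import Lia.

(* Weak commutativity lets one rotate any product [u * v <= e] into
   [v * u <= e].  Rotating the factor [y] to the front and residuating turns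
   [x y <= e] into [x <= y \ e], which by the omega condition is
   [x <= y^2 \ e]; hence in a product below [e] a factor [y] may be replaced by
   [y^2], and by induction by any positive power [y^k].  Doing this factor by
   factor changes all exponents of a product of powers. *)

Lemma le_mul_e_ldiv (A : HpsUL) (x y : A) : le (mul x y) e <-> le y (ldiv x e).
Proof. apply resid_l. Qed.

Section WeakComm.
Variable A : HpsUL.
Hypothesis Hwc : weak_comm A.

Lemma le_mul_e_comm (x y : A) : le (mul x y) e <-> le (mul y x) e.
Proof. split; apply Hwc. Qed.

Hypothesis Hom : omega_cond A.

Lemma le_mul_e_sqr (x y : A) : le (mul x y) e <-> le (mul x (pw y 2)) e.
Proof.
  rewrite le_mul_e_comm, le_mul_e_ldiv, Hom, <- le_mul_e_ldiv, le_mul_e_comm.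
  reflexivity.
Qed.

Lemma le_mul_e_pwS (c x : A) (m : nat) :
  le (mul c (pw x (S m))) e <-> le (mul c x) e.
Proof.
  revert c; induction m as [|m IHm]; intro c.
  - simpl; rewrite mul_e_l; reflexivity.
  - assert (pw_SS : mul c (pw x (S (S m))) = mul (mul c (pw x m)) (pw x 2)).
    { simpl; rewrite mul_e_l, !mul_assoc; reflexivity. }
    rewrite pw_SS, <- le_mul_e_sqr, <- mul_assoc.
    apply IHm.
Qed.

Lemma le_mul_e_pw_mid (a b x : A) (k : nat) : 0 < k ->
  le (mul (mul a (pw x k)) b) e <-> le (mul (mul a x) b) e.
Proof.
  intro k_gt0; destruct k as [|m]; [lia|].
  rewrite le_mul_e_comm, mul_assoc, le_mul_e_pwS, <- mul_assoc, le_mul_e_comm.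
  reflexivity.
Qed.

Lemma le_mul_e_prodpw (n : nat) (x : nat -> A) (k l : nat -> nat) (b : A) :
  (forall i, i < n -> 0 < k i) -> (forall i, i < n -> 0 < l i) ->
  le (mul (prodpw x k n) b) e <-> le (mul (prodpw x l n) b) e.
Proof.
  revert b; induction n as [|n IHn]; intros b k_gt0 l_gt0; simpl.
  - reflexivity.
  - rewrite (le_mul_e_pw_mid _ _ _ (k n)), (le_mul_e_pw_mid _ _ _ (l n))
      by (apply k_gt0 || apply l_gt0; lia).
    rewrite <- !mul_assoc.
    apply IHn; intros i Hi; [apply k_gt0 | apply l_gt0]; lia.
Qed.

End WeakComm.

Theorem lemma2p4 (A : HpsUL) (Hwc : weak_comm A) (Hom : omega_cond A) :
  (forall x y : A, le (mul x y) e <-> le (mul x (pw y 2)) e) /\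
  (forall (n : nat) (x : nat -> A) (k l : nat -> nat),
     (forall i, i < n -> 0 < k i) -> (forall i, i < n -> 0 < l i) ->
     (le (prodpw x k n) e <-> le (prodpw x l n) e)).
Proof.
  split.
  - exact (le_mul_e_sqr A Hwc Hom).
  - intros n x k l k_gt0 l_gt0.
    rewrite <- (mul_e_r _ (prodpw x k n)), <- (mul_e_r _ (prodpw x l n)).
    exact (le_mul_e_prodpw A Hwc Hom n x k l e k_gt0 l_gt0).
Qed.
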